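(* A finite simple graph $G$ is a one-dimensional geometric graph if and only if $\Gamma^*(G)=0$.
   Context: A graph $G$ is a one-dimensional geometric graph if there is a map $\pi:V(G)\to\mathbb R$ such that for all distinct $u,v$, $u\sim v$ iff $|\pi(u)-\pi(v)|\le 1$. For a linear order $\prec$ on $V(G)$ and $v\in V(G)$ let $D(v)=\{x: x\prec v\}$, $U(v)=\{x: v\prec x\}$, and $N(v)$ the set of neighbours of $v$. Let $[x]_+=\max(x,0)$. For $A\subseteq V(G)$, $$\Gamma^*(G,\prec,A)=\frac{1}{|V(G)|^3}\sum_{u\prec v}\big[|N(v)\cap A\cap D(u)|-|N(u)\cap A\cap D(u)|\big]_+ +\frac{1}{|V(G)|^3}\sum_{u\prec v}\big[|N(u)\cap A\cap U(v)|-|N(v)\cap A\cap U(v)|\big]_+ ,$$ where the sums run over ordered pairs $(u,v)$ of vertices with $u\prec v$. Further $\Gamma^*(G,\prec)=\max_{A\subseteq V(G)}\Gamma^*(G,\prec,A)$ and $\Gamma^*(G)=\min_{\prec}\Gamma^*(G,\prec)$, the minimum over all linear orderings of $V(G)$. *)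

From HB Require Import structures.
From mathcomp Require Import all_boot all_order all_algebra all_fingroup.
From Stdlib Require Reals.
Set Implicit Arguments. Unset Strict Implicit. Unset Printing Implicit Defensive.
Import Order.TTheory GRing.Theory Num.Theory.

Definition simple_graph (T : finType) (e : rel T) : Prop :=
  symmetric e /\ irreflexive e.

Definition one_dim_geometric (T : finType) (e : rel T) : Prop :=
  exists pi : T -> Reals.Rdefinitions.R,
    forall u v : T, u <> v ->
      (e u v <-> Reals.Rdefinitions.Rle
                   (Reals.Rbasic_fun.Rabs (Reals.Rdefinitions.Rminus (pi u) (pi v)))
                   Reals.Rdefinitions.R1).

Local Open Scope ring_scope.

Definition posp (x : rat) : rat := Num.max 0 x.

Definition nbhd (T : finType) (e : rel T) (v : T) : {set T} := [set x | e v x].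

Definition GammaA (T : finType) (e : rel T) (lt : rel T) (A : {set T}) : rat :=
  let Dn := fun u => [set x | lt x u] in
  let Up := fun v => [set x | lt v x] in
  (#|T|%:R ^+ 3)^-1 *
    (\sum_(u : T) \sum_(v : T | lt u v)
        posp ((#|nbhd e v :&: A :&: Dn u|)%:R - (#|nbhd e u :&: A :&: Dn u|)%:R))
  + (#|T|%:R ^+ 3)^-1 *
    (\sum_(u : T) \sum_(v : T | lt u v)
        posp ((#|nbhd e u :&: A :&: Up v|)%:R - (#|nbhd e v :&: A :&: Up v|)%:R)).

(* Gamma*(G, <) = max over A of Gamma*(G,<,A) (all values are >= 0, so 0 is a
   harmless identity for the max). *)
Definition GammaOrd (T : finType) (e : rel T) (lt : rel T) : rat :=
  \big[Num.max/0]_(A : {set T}) GammaA e lt A.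

(* Linear orders on the finite set T are exactly the relations
   u < v  :=  rank (p u) < rank (p v)  for a permutation p of T. *)
Definition perm_order (T : finType) (p : {perm T}) : rel T :=
  fun u v => (enum_rank (p u) < enum_rank (p v))%N.

(* Gamma*(G) = min over all linear orders; the min is seeded with the value at
   the identity permutation (itself one of the minimised values). *)
Definition Gamma (T : finType) (e : rel T) : rat :=
  \big[Num.min/GammaOrd e (perm_order 1)]_(p : {perm T}) GammaOrd e (perm_order p).

From Stdlib Require Import Rdefinitions RIneq Rbasic_fun Lra.
From mathcomp Require Import all_boot all_order all_algebra all_fingroup.
From mathcomp Require Import zify.
Import Order.TTheory GRing.Theory Num.Theory.
Set Implicit Arguments. Unset Strict Implicit. Unset Printing Implicit Defensive.

(* A finite simple graph G is a one-dimensional geometric graph iff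
   Gamma*(G) = 0.  Both sides are equivalent to the existence of an
   umbrella ordering: a linear order < of V(G) such that every edge x ~ v
   with x < u < v forces the edges x ~ u and u ~ v.

   Every summand of Gamma*(G, <, A) is nonnegative,
     so Gamma*(G) = 0 iff some order < has Gamma*(G, <, A) = 0 for all A,
     i.e. iff the relevant neighbourhood counts never exceed each other.
     For all A this holds exactly for umbrella orderings: the umbrella
     property gives the needed inclusions of neighbourhoods, and testing
     singletons A = {x} recovers the umbrella property.
   - Geometric half.  Sorting the vertices by their positions pi yields an
     umbrella ordering.  Conversely, listing the vertices along an umbrella
     ordering, positions are placed one at a time, strictly increasing, with
     gaps < 1 on edges and > 1 on non-edges: the neighbours of the new vertex
     among the earlier ones form a final segment, so a suitable new position
     always exists. *)

Definition umbrella (X : Type) (adj lt : rel X) : Prop :=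
  forall x u v, lt x u -> lt u v -> adj x v -> adj x u /\ adj u v.

Section GammaZero.
Local Open Scope ring_scope.
Variables (T : finType) (e : rel T).

Definition pair_mass (lt : rel T) (F : T -> T -> rat) : rat :=
  (#|T|%:R ^+ 3)^-1 * \sum_(u : T) \sum_(v : T | lt u v) F u v.

Lemma pair_mass_ge0 lt F : (forall u v, 0 <= F u v) -> 0 <= pair_mass lt F.
Proof.
move=> F_ge0; rewrite /pair_mass mulr_ge0 ?invr_ge0 ?exprn_ge0 ?ler0n //.
by apply: sumr_ge0 => u _; apply: sumr_ge0.
Qed.

Lemma pair_mass_eq0 lt F : (forall u v, 0 <= F u v) ->
  pair_mass lt F = 0 <-> forall u v, lt u v -> F u v = 0.
Proof.
move=> F_ge0; split=> [|F0]; last first.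
  by rewrite /pair_mass big1 ?mulr0 // => u _; apply: big1 => v; apply: F0.
have [T0 _ u|T_gt0] := posnP #|T|; first by have := card0_eq T0 u; rewrite inE.
move/eqP; rewrite /pair_mass mulf_eq0 invr_eq0 expf_eq0 pnatr_eq0 eqn0Ngt T_gt0 /=.
move=> /eqP sum0 u v uv.
have row0 := (psumr_eq0P (fun w _ => sumr_ge0 _ (fun z _ => F_ge0 w z)) sum0 (i := u) isT).
exact: (psumr_eq0P (fun w _ => F_ge0 u w) row0 (i := v) uv).
Qed.

Lemma posp_ge0 x : 0 <= posp x.
Proof. by rewrite /posp le_max lexx. Qed.

Lemma posp_subn_eq0 (a b : nat) : posp (a%:R - b%:R) = 0 <-> (a <= b)%N.
Proof.
rewrite /posp; split=> [ab0|ab]; last by rewrite max_l // subr_le0 ler_nat.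
have : a%:R - b%:R <= 0 :> rat by rewrite -ab0 le_max lexx orbT.
by rewrite subr_le0 ler_nat.
Qed.

Definition excess_below (lt : rel T) (A : {set T}) (u v : T) : rat :=
  posp (#|nbhd e v :&: A :&: [set x | lt x u]|%:R
        - #|nbhd e u :&: A :&: [set x | lt x u]|%:R).
Definition excess_above (lt : rel T) (A : {set T}) (u v : T) : rat :=
  posp (#|nbhd e u :&: A :&: [set x | lt v x]|%:R
        - #|nbhd e v :&: A :&: [set x | lt v x]|%:R).

Lemma GammaA_split lt A :
  GammaA e lt A = pair_mass lt (excess_below lt A) + pair_mass lt (excess_above lt A).
Proof. by []. Qed.

Lemma GammaA_ge0 lt A : 0 <= GammaA e lt A.
Proof. by rewrite GammaA_split addr_ge0 ?pair_mass_ge0 // => *; apply: posp_ge0. Qed.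

Definition no_excess (lt : rel T) (A : {set T}) : Prop :=
  forall u v, lt u v ->
    (#|nbhd e v :&: A :&: [set x | lt x u]| <= #|nbhd e u :&: A :&: [set x | lt x u]|)%N /\
    (#|nbhd e u :&: A :&: [set x | lt v x]| <= #|nbhd e v :&: A :&: [set x | lt v x]|)%N.

Lemma GammaA_eq0P lt A : GammaA e lt A = 0 <-> no_excess lt A.
Proof.
have below_ge0 u v : 0 <= excess_below lt A u v by apply: posp_ge0.
have above_ge0 u v : 0 <= excess_above lt A u v by apply: posp_ge0.
rewrite GammaA_split; split.
  move/eqP; rewrite paddr_eq0 ?pair_mass_ge0 //.
  move=> /andP[/eqP/(pair_mass_eq0 _ below_ge0) lo /eqP/(pair_mass_eq0 _ above_ge0) hi].
  move=> u v uv; split; apply/posp_subn_eq0; [exact: lo | exact: hi].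
move=> h; rewrite (proj2 (pair_mass_eq0 _ below_ge0)) ?(proj2 (pair_mass_eq0 _ above_ge0));
  by rewrite ?addr0 // => u v /h[] *; apply/posp_subn_eq0.
Qed.

(* In an umbrella ordering each neighbourhood count is dominated, for every
   A: an A-neighbour x < u of v is a neighbour of u, and an A-neighbour
   x > v of u is a neighbour of v. *)
Lemma umbrella_no_excess lt A :
  symmetric e -> umbrella e lt -> no_excess lt A.
Proof.
move=> sym umb u v uv; split; apply: subset_leq_card; apply/subsetP => x; rewrite !inE.
- case/andP=> /andP[evx xA] xu; rewrite xA xu !andbT sym.
  by have [] := umb x u v xu uv; rewrite 1?sym.
- case/andP=> /andP[eux xA] vx; rewrite xA vx !andbT.
  by have [] := umb u v x uv vx eux.
Qed.

(* Conversely, testing A = {x} and A = {v} recovers the umbrella property. *)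
Lemma no_excess_umbrella lt :
  symmetric e -> (forall A, no_excess lt A) -> umbrella e lt.
Proof.
move=> sym noex x u v xu uv exv; split.
- have /card_gt0P[y] : (0 < #|nbhd e u :&: [set x] :&: [set y | lt y u]|)%N.
    apply: leq_trans (proj1 (noex [set x] u v uv)); apply/card_gt0P.
    by exists x; rewrite !inE eqxx xu sym exv.
  by rewrite !inE => /andP[/andP[euy /eqP yx] _]; rewrite sym -yx.
- have /card_gt0P[y] : (0 < #|nbhd e u :&: [set v] :&: [set y | lt u y]|)%N.
    apply: leq_trans (proj2 (noex [set v] x u xu)); apply/card_gt0P.
    by exists v; rewrite !inE eqxx uv exv.
  by rewrite !inE => /andP[/andP[euy /eqP yv] _]; rewrite -yv.
Qed.

(* Gamma*(G, <) is a maximum of nonnegative values, so it vanishes iff all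
   of them do. *)
Lemma GammaOrd_eq0 lt : GammaOrd e lt = 0 <-> forall A, GammaA e lt A = 0.
Proof.
split=> [G0 A|A0].
  apply/eqP; rewrite eq_le GammaA_ge0 andbT -G0 /GammaOrd (bigD1 A) //=.
  by rewrite le_max lexx.
by apply: (big_ind (fun y => y = 0)) => [//|x y -> ->|A _]; rewrite ?maxxx ?A0.
Qed.

Lemma GammaOrd_ge0 lt : 0 <= GammaOrd e lt.
Proof.
apply: (big_ind (fun y => 0 <= y)) => [//|x y x_ge0 y_ge0|A _]; last exact: GammaA_ge0.
by rewrite le_max x_ge0.
Qed.

(* Gamma*(G) is attained by some linear order, and all values are >= 0. *)
Lemma Gamma_eq0 : Gamma e = 0 <-> exists p : {perm T}, GammaOrd e (perm_order p) = 0.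
Proof.
split=> [G0|[p p0]].
  have [p Gp] : exists p : {perm T}, Gamma e = GammaOrd e (perm_order p).
    apply: (big_ind (fun y => exists p : {perm T}, y = GammaOrd e (perm_order p))).
    - by exists 1%g.
    - move=> x y [p ->] [q ->].
      by rewrite minEle; case: ifP => _; [exists p | exists q].
    - by move=> p _; exists p.
  by exists p; rewrite -Gp.
apply/eqP; rewrite eq_le; apply/andP; split.
  by rewrite -p0 /Gamma (bigD1 p) //= ge_min lexx.
apply: (big_ind (fun y => 0 <= y)) => [|x y x_ge0 y_ge0|q _]; rewrite ?GammaOrd_ge0 //.
by rewrite le_min x_ge0.
Qed.

Lemma Gamma_eq0_umbrella :
  symmetric e -> Gamma e = 0 <-> exists p : {perm T}, umbrella e (perm_order p).
Proof.
move=> sym; rewrite Gamma_eq0; split=> -[p p_ok]; exists p.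
  apply: no_excess_umbrella => // A.
  by apply/GammaA_eq0P; move: A; apply/GammaOrd_eq0.
by apply/GammaOrd_eq0 => A; apply/GammaA_eq0P; apply: umbrella_no_excess.
Qed.
End GammaZero.

Section PermOrder.
Variable T : finType.

Lemma perm_order_irr (p : {perm T}) u v : perm_order p u v -> u <> v.
Proof. by rewrite /perm_order => uv eq_uv; move: uv; rewrite eq_uv ltnn. Qed.

Lemma perm_order_trans (p : {perm T}) u v w :
  perm_order p u v -> perm_order p v w -> perm_order p u w.
Proof. exact: ltn_trans. Qed.

(* Every real labelling of the vertices is nondecreasing along some linear
   order: sort the vertices by their labels. *)
Lemma sorting_order (f : T -> R) :
  exists p : {perm T}, forall u v, perm_order p u v -> Rle (f u) (f v).
Proof.
pose leb x y := if Rle_dec (f x) (f y) then true else false.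
have leb_total : total leb.
  by move=> x y; rewrite /leb; do 2 case: Rle_dec => //=; lra.
have leb_trans : transitive leb.
  by move=> x y z; rewrite /leb; do 3 case: Rle_dec => //=; lra.
pose s := sort leb (enum T).
have perm_s : perm_eq s (enum T) by rewrite perm_sort.
have in_s x : x \in s by rewrite (perm_mem perm_s) mem_enum.
have index_lt x : (index x s < #|T|)%N by rewrite cardE -(perm_size perm_s) index_mem.
pose rank x := enum_val (Ordinal (index_lt x)).
have rank_inj : injective rank.
  move=> x y /enum_val_inj/(congr1 val) /= eq_index.
  by rewrite -(nth_index x (in_s x)) eq_index nth_index.
exists (perm rank_inj) => u v; rewrite /perm_order !permE /rank !enum_valK /= => uv.
have := sorted_ltn_nth leb_trans u (sort_sorted leb_total (enum T)).
move=> /(_ (index u s) (index v s)); rewrite !inE !index_mem !in_s => /(_ isT isT uv).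
by rewrite !nth_index // /leb; case: Rle_dec.
Qed.
End PermOrder.

Section IntervalRealization.
Local Open Scope R_scope.
Variable adj : nat -> nat -> bool.

Definition below (n : nat) : rel nat := fun i j => (i < j < n)%N.

Definition realizes (n : nat) (y : nat -> R) : Prop :=
  forall i j, (i < j)%N -> (j < n)%N ->
    y i < y j /\ (adj i j -> y j - y i < 1) /\ (~~ adj i j -> 1 < y j - y i).

Lemma realizes_mono n y i j : realizes n y -> (i <= j)%N -> (j < n)%N -> y i <= y j.
Proof.
move=> yn; rewrite leq_eqVlt => /orP[/eqP->|ij] jn; first lra.
by have [] := yn i j ij jn; lra.
Qed.

Lemma last_neighbours n : umbrella adj (below n.+1) ->
  exists2 l, (l <= n)%N & forall i, (i < n)%N -> adj i n = (l <= i)%N.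
Proof.
move=> umb; pose l := find (adj^~ n) (iota 0 n).
have l_le : (l <= n)%N by rewrite -[X in (_ <= X)%N](size_iota 0 n) find_size.
exists l => // i lt_in; have [lt_il|le_li] := ltnP i l.
  by have := before_find 0%N lt_il; rewrite nth_iota ?add0n //; lia.
have adj_ln : adj l n.
  have := @nth_find _ 0%N (adj^~ n) (iota 0 n); rewrite nth_iota ?add0n; last lia.
  by apply; rewrite has_find size_iota; lia.
move: le_li; rewrite leq_eqVlt => /orP[/eqP<- // | lt_li].
by have [] := umb l i n ltac:(rewrite /below; lia) ltac:(rewrite /below; lia) adj_ln.
Qed.

(* Extending a realization by one point c: above all previous points, within
   distance 1 exactly of the points l, ..., n-1.  This needs the segment
   [l, n) to have diameter < 1. *)
Lemma extend_realization n l y : realizes n y -> (l <= n)%N ->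
  ((l < n)%N -> y n.-1 - y l < 1) ->
  exists c, (forall i, (i < n)%N -> y i < c) /\
            (forall i, (l <= i < n)%N -> c - y i < 1) /\
            (forall i, (i < l)%N -> 1 < c - y i).
Proof.
move=> yn l_le diam; have mono i j := @realizes_mono n y i j yn.
have [->|lt_ln] := eqVneq l n.
  exists (y n.-1 + 2); split; [|split] => i; [|lia|];
    by move=> ?; have := mono i n.-1 ltac:(lia) ltac:(lia); lra.
have {}lt_ln : (l < n)%N by lia.
have {}diam := diam lt_ln.
have [l0|l_gt0] := posnP l.
  exists ((y n.-1 + y l + 1) / 2); split; [|split] => i; [|move=> /andP[li ?]|lia].
  - by move=> ?; have := mono i n.-1 ltac:(lia) ltac:(lia); lra.
  - by have := mono l i li ltac:(lia); lra.
have gap : y l.-1 < y l by have [] := yn l.-1 l ltac:(lia) lt_ln.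
pose m := Rmax (y n.-1) (y l.-1 + 1).
have [m1 m2] : y n.-1 <= m /\ y l.-1 + 1 <= m by split; [apply: Rmax_l | apply: Rmax_r].
have m3 : m < y l + 1 by apply: Rmax_lub_lt; lra.
exists ((m + y l + 1) / 2); split; [|split] => i; [|move=> /andP[li ?]|].
- by move=> ?; have := mono i n.-1 ltac:(lia) ltac:(lia); lra.
- by have := mono l i li ltac:(lia); lra.
- by move=> ?; have := mono i l.-1 ltac:(lia) ltac:(lia); lra.
Qed.

Lemma umbrella_realizable n : umbrella adj (below n) -> exists y, realizes n y.
Proof.
elim: n => [|n IH] umb; first by exists (fun=> 0) => i j _.
have [y yn] : exists y, realizes n y.
  by apply: IH => i j k /andP[ij ?] /andP[jk ?]; apply: umb; rewrite /below; lia.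
have [l l_le nbr] := last_neighbours umb.
have diam : (l < n)%N -> y n.-1 - y l < 1.
  move=> lt_ln; have [->|lt_l] := eqVneq l n.-1; first lra.
  have adj_ln : adj l n by rewrite nbr.
  have [adj_l _] := umb l n.-1 n ltac:(rewrite /below; lia) ltac:(rewrite /below; lia) adj_ln.
  by have [_ []] := yn l n.-1 ltac:(lia) ltac:(lia); move=> /(_ adj_l).
have [c [c_gt [c_near c_far]]] := extend_realization yn l_le diam.
exists (fun i => if i == n then c else y i) => i j ij j_le.
have -> : (i == n) = false by apply/eqP; lia.
move: j_le; rewrite ltnS leq_eqVlt => /orP[/eqP jn | jn]; last first.
  by rewrite (_ : (j == n) = false); [apply: yn | apply/eqP; lia].
subst j; rewrite eqxx nbr //; split; first exact: c_gt.
by split=> [li | /negbTE/negbT]; [apply: c_near; lia | rewrite -ltnNge; apply: c_far].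
Qed.
End IntervalRealization.

Section Geometric.
Local Open Scope R_scope.
Variables (T : finType) (e : rel T).

Lemma Rabs_sub_le1 a b : a <= b -> (Rabs (a - b) <= 1 <-> b - a <= 1).
Proof. by move=> ab; rewrite Rabs_minus_sym Rabs_right; [|lra]. Qed.

(* Geometric graphs have an umbrella ordering: sort by position. *)
Lemma geometric_umbrella :
  one_dim_geometric e -> exists p : {perm T}, umbrella e (perm_order p).
Proof.
case=> pi pi_ok; have [p p_mono] := sorting_order pi; exists p => x u v xu uv exv.
have xv := perm_order_trans xu uv.
have pxu := p_mono _ _ xu; have puv := p_mono _ _ uv.
have := (pi_ok x v (perm_order_irr xv)).1 exv; rewrite Rabs_sub_le1 => [dxv|]; last lra.
split; [apply/(pi_ok x u (perm_order_irr xu)) | apply/(pi_ok u v (perm_order_irr uv))];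
  by rewrite Rabs_sub_le1; lra.
Qed.

Lemma realization_geometric adj n y (idx : T -> nat) :
  symmetric e -> injective idx -> (forall u v, adj (idx u) (idx v) = e u v) ->
  (forall u, (idx u < n)%N) -> realizes adj n y -> one_dim_geometric e.
Proof.
move=> sym idx_inj adj_idx idx_lt yn; exists (fun u => y (idx u)).
have ordered a b : (idx a < idx b)%N -> (e a b <-> Rabs (y (idx a) - y (idx b)) <= 1).
  move=> ab; have [lt_y [near far]] := yn _ _ ab (idx_lt b).
  rewrite -adj_idx Rabs_sub_le1; last lra.
  case: (adj _ _) near far => [near _ | _ far]; split=> //.
  - by have := near isT; lra.
  - by have := far isT; lra.
move=> u v /eqP; rewrite -(inj_eq idx_inj) neq_ltn => /orP[uv | vu]; first exact: ordered.
by rewrite sym Rabs_minus_sym; apply: ordered.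
Qed.

(* Umbrella orderings give geometric embeddings: number the vertices along
   the order and realize the resulting adjacency on {0, ..., #|T|-1}. *)
Lemma umbrella_geometric (p : {perm T}) :
  symmetric e -> umbrella e (perm_order p) -> one_dim_geometric e.
Proof.
move=> sym umb; have [T0|/card_gt0P[d _]] := posnP #|T|.
  by exists (fun=> 0) => u; have := card0_eq T0 u; rewrite inE.
pose idx u := nat_of_ord (enum_rank (p u)).
pose vtx i := (p^-1)%g (enum_val (insubd (enum_rank d) i)).
have vtxK u : vtx (idx u) = u by rewrite /vtx /idx valKd enum_rankK permK.
have idxK i : (i < #|T|)%N -> idx (vtx i) = i.
  by move=> lt_i; rewrite /vtx /idx permKV enum_valK val_insubd lt_i.
pose adj i j := e (vtx i) (vtx j).
have [y yn] : exists y, realizes adj #|T| y.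
  apply: umbrella_realizable => i j k /andP[ij jT] /andP[jk kT]; apply: umb;
    by rewrite /perm_order -/(idx _) -/(idx _) !idxK //; lia.
have idx_inj : injective idx by move=> u v /(congr1 vtx); rewrite !vtxK.
apply: (realization_geometric sym idx_inj _ _ yn) => [u v|u]; last exact: ltn_ord.
by rewrite /adj !vtxK.
Qed.
End Geometric.

Theorem mainTheorem2 (T : finType) (e : rel T) :
  simple_graph e ->
  (one_dim_geometric e <-> Gamma e = 0%R).
Proof.
case=> sym _; rewrite Gamma_eq0_umbrella //; split; first exact: geometric_umbrella.
by case=> p; apply: umbrella_geometric.
Qed.
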